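(* Let $f:\mathbb{R}^n\to(-\infty,+\infty]$ be proper, lower semicontinuous and prox-bounded with threshold $\lambda_f>0$, let $0<\lambda<\lambda_f$, and suppose $\operatorname{dom}f$ is convex. Then the following are equivalent: (a) $\partial_p^\lambda f(x)\ne\varnothing$ for every $x\in\operatorname{dom}f$; (b) $P_\lambda f=\operatorname{conv}(P_\lambda f)$ and $\operatorname{dom}[\partial\operatorname{conv}(f+\lambda^{-1}j)]=\operatorname{dom}f$; (c) $P_\lambda f$ is maximally monotone and $\operatorname{dom}[\partial\operatorname{conv}(f+\lambda^{-1}j)]=\operatorname{dom}f$; (d) $f+\lambda^{-1}j$ is convex and $\operatorname{dom}\partial f=\operatorname{dom}f$; (e) $\partial_p^\lambda f=\partial f$ and $\operatorname{dom}\partial f=\operatorname{dom}f$.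
   Context: $j:=\frac12\|\cdot\|^2$. $P_\lambda f(x):=\operatorname{argmin}_y\{f(y)+\frac1{2\lambda}\|y-x\|^2\}$ (set-valued); $\operatorname{conv}(P_\lambda f)$ is the set-valued map $x\mapsto\operatorname{conv}(P_\lambda f(x))$. Prox-bounded with threshold $\lambda_f=\sup\{\lambda>0:\inf_y\{f(y)+\frac1{2\lambda}\|y-x\|^2\}>-\infty\text{ for some }x\}$. $v\in\partial_p^\lambda f(x)$ iff $x\in\operatorname{dom}f$ and $f(y)\ge f(x)+\langle v,y-x\rangle-\frac1{2\lambda}\|y-x\|^2$ for all $y$. $\operatorname{conv}g$ is the convex hull of a function $g$; $\partial$ is the limiting subdifferential. *)

(* R^n is represented by row vectors 'rV[R]_n with the EUCLIDEAN inner product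
   defined below (not the library's sup-norm). *)
From HB Require Import structures.
From mathcomp Require Import all_boot all_order all_algebra.
From mathcomp Require Import boolp classical_sets reals constructive_ereal ereal.
Set Implicit Arguments. Unset Strict Implicit. Unset Printing Implicit Defensive.
Import Order.TTheory GRing.Theory Num.Theory.
Local Open Scope classical_set_scope.
Local Open Scope ring_scope.

Section Defs.
Variables (R : realType) (n : nat).
Notation V := 'rV[R]_n.

Definition dotp (u v : V) : R := \sum_(i < n) u 0 i * v 0 i.
Definition sqn (u : V) : R := dotp u u.
Definition enorm (u : V) : R := Num.sqrt (sqn u).
Definition jfun (u : V) : R := sqn u / 2.

Definition dom (f : V -> \bar R) : set V := [set x | (f x < +oo)%E].

Definition proper_fun (f : V -> \bar R) : Prop :=
  (forall x, f x != -oo%E) /\ (exists x, (f x < +oo)%E).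

Definition lsc (f : V -> \bar R) : Prop :=
  forall (x : V) (a : R), (a%:E < f x)%E ->
    exists2 d : R, 0 < d & forall y, enorm (y - x) < d -> (a%:E < f y)%E.

Definition pen (lam : R) (x y : V) : R := sqn (y - x) / (2 * lam).

Definition moreau (f : V -> \bar R) (lam : R) (x : V) : \bar R :=
  ereal_inf [set (f y + (pen lam x y)%:E)%E | y in [set: V]].

Definition prox_set (f : V -> \bar R) : set R :=
  [set lam | 0 < lam /\ exists x, (-oo < moreau f lam x)%E].

Definition prox_bounded (f : V -> \bar R) : Prop := exists lam, prox_set f lam.

Definition prox_threshold (f : V -> \bar R) : \bar R :=
  ereal_sup [set lam%:E | lam in prox_set f].

Definition prox (f : V -> \bar R) (lam : R) (x : V) : set V :=
  [set y | forall z, (f y + (pen lam x y)%:E <= f z + (pen lam x z)%:E)%E].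

Definition convcomb (m : nat) (w : 'I_m -> R) (p : 'I_m -> V) (x : V) : Prop :=
  (forall i, 0 <= w i) /\ \sum_(i < m) w i = 1 /\ x = \sum_(i < m) w i *: p i.

Definition conv_set (S : set V) : set V :=
  [set x | exists m (w : 'I_m -> R) (p : 'I_m -> V),
             convcomb w p x /\ forall i, S (p i)].

Definition convex_set (S : set V) : Prop :=
  forall x y (t : R), S x -> S y -> 0 <= t <= 1 -> S (t *: x + (1 - t) *: y).

Definition convex_fun (g : V -> \bar R) : Prop :=
  forall x y (t : R), dom g x -> dom g y -> 0 <= t <= 1 ->
    (g (t *: x + (1 - t) *: y)%R <= t%:E * g x + (1 - t)%R%:E * g y)%E.

(* convex hull of a function: conv g (x) = inf { sum_i w_i g(x_i) : x = sum_i w_i x_i,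
   convex combination } (Rockafellar, Thm 5.3) *)
Definition conv_fun (g : V -> \bar R) (x : V) : \bar R :=
  ereal_inf [set r | exists m (w : 'I_m -> R) (p : 'I_m -> V),
     convcomb w p x /\ r = (\sum_(i < m) (w i)%:E * g (p i))%E].

Definition prox_subdiff (f : V -> \bar R) (lam : R) (x : V) : set V :=
  [set v | dom f x /\ forall y,
     (f x + (dotp v (y - x) - pen lam x y)%:E <= f y)%E].

Definition frechet_subdiff (f : V -> \bar R) (x : V) : set V :=
  [set v | f x \is a fin_num /\
     forall eps : R, 0 < eps -> exists2 d : R, 0 < d & forall y, enorm (y - x) < d ->
       ((fine (f x) + dotp v (y - x) - eps * enorm (y - x))%:E <= f y)%E].

Definition vcvg (u : nat -> V) (x : V) : Prop :=
  forall eps : R, 0 < eps -> exists N, forall k, (N <= k)%N -> enorm (u k - x) < eps.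
Definition rcvg (u : nat -> R) (a : R) : Prop :=
  forall eps : R, 0 < eps -> exists N, forall k, (N <= k)%N -> `|u k - a| < eps.

Definition lim_subdiff (f : V -> \bar R) (x : V) : set V :=
  [set v | f x \is a fin_num /\
     exists (xs : nat -> V) (vs : nat -> V),
       vcvg xs x /\ rcvg (fun k => fine (f (xs k))) (fine (f x)) /\
       (forall k, frechet_subdiff f (xs k) (vs k)) /\ vcvg vs v].

Definition sdom (T : V -> set V) : set V := [set x | exists v, T x v].

Definition monotone_op (T : V -> set V) : Prop :=
  forall x y u v, T x u -> T y v -> 0 <= dotp (u - v) (x - y).
Definition max_monotone (T : V -> set V) : Prop :=
  monotone_op T /\
  forall T' : V -> set V, monotone_op T' -> (forall x, T x `<=` T' x) -> T' = T.

Definition add_j (f : V -> \bar R) (lam : R) (x : V) : \bar R :=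
  (f x + (lam^-1 * jfun x)%:E)%E.

End Defs.

(* Write g := f + lam^-1 j. A proximal subgradient v of f at x is the same thing as
   an affine minorant of g that is exact at x, with slope v + x / lam. So (a) says
   that g is supported at every point of its convex domain, i.e. that g is convex;
   for convex g, Frechet and limiting subgradients are global ones, which gives (d)
   and (e). For convex g the sets P_lam f (z) = argmin (g - <z, .> / lam) are convex,
   and the resolvent argmin (g + pen (x + u)) shows that no monotone map properly
   extends P_lam f. Conversely, a maximally monotone P_lam f is convex-valued. If
   P_lam f is convex-valued and w is a subgradient of conv g at x, then x minimizes
   g - <w, .>: otherwise, separating x from the closed convex set
   argmin (g - <w, .>) = P_lam f (lam w) by a half-space yields an affine minorant of
   g that exceeds conv g at x. Prox-boundedness below the threshold makes every tilt
   g - <a, .> coercive, which provides all the minimizers used. *)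

From mathcomp Require Import all_boot all_order all_algebra.
From mathcomp Require Import boolp classical_sets reals constructive_ereal ereal.
From mathcomp Require Import topology normedtype.
From mathcomp Require Import ring lra.
Set Implicit Arguments. Unset Strict Implicit. Unset Printing Implicit Defensive.
Import Order.TTheory GRing.Theory Num.Theory numFieldNormedType.Exports.
Local Open Scope classical_set_scope.
Local Open Scope ring_scope.

Section Euclidean.
Variables (R : realType) (n : nat).
Local Notation V := 'rV[R]_n.
Implicit Types (u v w : V).

Lemma dotpC u v : dotp u v = dotp v u.
Proof. by apply: eq_bigr => i _; rewrite mulrC. Qed.

Lemma dotpDl u v w : dotp (u + v) w = dotp u w + dotp v w.
Proof. by rewrite /dotp -big_split; apply: eq_bigr => i _; rewrite !mxE mulrDl. Qed.

Lemma dotpZl (a : R) u v : dotp (a *: u) v = a * dotp u v.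
Proof. by rewrite /dotp mulr_sumr; apply: eq_bigr => i _; rewrite !mxE mulrA. Qed.

Lemma dotp0l v : dotp 0 v = 0.
Proof. by rewrite -(scale0r 0) dotpZl mul0r. Qed.

Lemma dotpNl u v : dotp (- u) v = - dotp u v.
Proof. by rewrite -scaleN1r dotpZl mulN1r. Qed.

Lemma dotpBl u v w : dotp (u - v) w = dotp u w - dotp v w.
Proof. by rewrite dotpDl dotpNl. Qed.

Lemma dotpDr u v w : dotp w (u + v) = dotp w u + dotp w v.
Proof. by rewrite dotpC dotpDl !(dotpC w). Qed.

Lemma dotpZr (a : R) u v : dotp v (a *: u) = a * dotp v u.
Proof. by rewrite dotpC dotpZl dotpC. Qed.

Lemma dotp0r v : dotp v 0 = 0.
Proof. by rewrite dotpC dotp0l. Qed.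

Lemma dotpNr u v : dotp v (- u) = - dotp v u.
Proof. by rewrite dotpC dotpNl dotpC. Qed.

Lemma dotpBr u v w : dotp w (u - v) = dotp w u - dotp w v.
Proof. by rewrite dotpDr dotpNr. Qed.

Lemma dotp_suml m (F : 'I_m -> V) v :
  dotp (\sum_(i < m) F i) v = \sum_(i < m) dotp (F i) v.
Proof.
by elim/big_rec2: _ => [|i y1 y2 _ <-]; rewrite ?dotp0l // dotpDl.
Qed.

Lemma sqn_ge0 u : 0 <= sqn u.
Proof. by apply: sumr_ge0 => i _; rewrite -expr2 sqr_ge0. Qed.

Lemma sqn_eq0 u : sqn u = 0 -> u = 0.
Proof.
move=> /(psumr_eq0P (fun i _ => sqr_ge0 (u 0 i))) u0.
by apply/rowP => i; rewrite mxE; apply/eqP; rewrite -sqrf_eq0; apply/eqP/u0.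
Qed.

Lemma sqnD u v : sqn (u + v) = sqn u + 2 * dotp u v + sqn v.
Proof. by rewrite /sqn !dotpDl !dotpDr (dotpC v u); ring. Qed.

Lemma sqnB u v : sqn (u - v) = sqn u - 2 * dotp u v + sqn v.
Proof. by rewrite /sqn !dotpBl !dotpBr (dotpC v u); ring. Qed.

Lemma sqnZ (a : R) u : sqn (a *: u) = a ^+ 2 * sqn u.
Proof. by rewrite /sqn dotpZl dotpZr mulrA expr2. Qed.

Lemma sqnN u : sqn (- u) = sqn u.
Proof. by rewrite /sqn dotpNl dotpNr opprK. Qed.

Lemma sqn_coord u i : u 0 i ^+ 2 <= sqn u.
Proof.
rewrite /sqn /dotp (bigD1 i) //= -expr2 lerDl.
by apply: sumr_ge0 => j _; rewrite -expr2 sqr_ge0.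
Qed.

Lemma enorm_ge0 u : 0 <= enorm u.
Proof. exact: sqrtr_ge0. Qed.

Lemma sqr_enorm u : enorm u ^+ 2 = sqn u.
Proof. by rewrite sqr_sqrtr // sqn_ge0. Qed.

Lemma enorm0 : enorm (0 : V) = 0.
Proof. by rewrite /enorm /sqn dotp0l sqrtr0. Qed.

Lemma enormZ (a : R) u : enorm (a *: u) = `|a| * enorm u.
Proof. by rewrite /enorm sqnZ sqrtrM ?sqr_ge0 // sqrtr_sqr. Qed.

Lemma enorm_lt_sqn u d : 0 < d -> (enorm u < d) = (sqn u < d ^+ 2).
Proof.
move=> d0; rewrite /enorm -{1}(ger0_norm (ltW d0)) -sqrtr_sqr ltr_sqrt //.
by rewrite exprn_gt0.
Qed.

Lemma dotp_cauchy_schwarz u v : `|dotp u v| <= enorm u * enorm v.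
Proof.
set a := enorm u; set b := enorm v.
have [ha hb] : sqn u = a ^+ 2 /\ sqn v = b ^+ 2 by rewrite !sqr_enorm.
have [a0 b0] : 0 <= a /\ 0 <= b by rewrite !enorm_ge0.
have [ae|an0] := eqVneq a 0.
  have -> : u = 0 by apply: sqn_eq0; rewrite ha ae expr0n.
  by rewrite dotp0l normr0 mulr_ge0.
have [be|bn0] := eqVneq b 0.
  have -> : v = 0 by apply: sqn_eq0; rewrite hb be expr0n.
  by rewrite dotp0r normr0 mulr_ge0.
have abp : 0 < a * b by rewrite mulr_gt0 // lt0r ?an0 ?bn0.
have h1 := sqn_ge0 (b *: u - a *: v).
have h2 := sqn_ge0 (b *: u + a *: v).
rewrite sqnB !sqnZ dotpZl dotpZr ha hb in h1.
rewrite sqnD !sqnZ dotpZl dotpZr ha hb in h2.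
by rewrite ler_norml; apply/andP; split; rewrite -(ler_pM2l abp); nra.
Qed.

Lemma ler_enormD u v : enorm (u + v) <= enorm u + enorm v.
Proof.
have h : sqn (u + v) <= (enorm u + enorm v) ^+ 2.
  rewrite sqnD -(sqr_enorm u) -(sqr_enorm v).
  have := dotp_cauchy_schwarz u v; have := ler_norm (dotp u v).
  have := enorm_ge0 u; have := enorm_ge0 v; nra.
apply: le_trans (ler_wsqrtr h) _.
by rewrite sqrtr_sqr ger0_norm // addr_ge0 // enorm_ge0.
Qed.

(* Young's inequality, from [0 <= |2 c u + a|^2]. *)
Lemma dotp_young u a (c : R) : 0 < c -> - (c * sqn u + sqn a / (4 * c)) <= dotp u a.
Proof.
move=> c0; have c4 : 0 < 4 * c by rewrite mulr_gt0.
have h := sqn_ge0 ((2 * c) *: u + a); rewrite sqnD sqnZ dotpZl in h.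
have e : (4 * c) * (sqn a / (4 * c)) = sqn a by rewrite mulrCA mulfV ?gt_eqF ?mulr1.
by rewrite -(ler_pM2l c4) mulrN mulrDr e; nra.
Qed.

End Euclidean.

Lemma le0_of_le_scale (R : realFieldType) (a b : R) :
  (forall t, 0 < t -> t <= 1 -> a <= t * b) -> a <= 0.
Proof.
move=> h; rewrite leNgt; apply/negP => a0.
have hp : 0 < a + `|b| + 1 by have := normr_ge0 b; lra.
set t := a / (a + `|b| + 1).
have e : t * (a + `|b| + 1) = a by rewrite /t mulfVK ?gt_eqF.
have t0 : 0 < t by rewrite divr_gt0.
have t1 : t <= 1 by rewrite /t ler_pdivrMr // mul1r; have := normr_ge0 b; lra.
have := h t t0 t1; have : t * b <= t * `|b| by rewrite ler_pM2l // ler_norm.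
by have := normr_ge0 b; nra.
Qed.

Lemma ltEFin_dense (R : realFieldType) (c : R) (z : \bar R) : (c%:E < z)%E ->
  exists2 b : R, c < b & (b%:E < z)%E.
Proof.
case: z => [v| |] //=; rewrite ?lte_fin => h.
- by exists ((c + v) / 2); rewrite ?lte_fin; lra.
- by exists (c + 1); [lra|rewrite ltry].
Qed.

Section ConvexCombinations.
Variables (R : realType) (n : nat).
Local Notation V := 'rV[R]_n.
Implicit Types (S : set V) (x y : V).

Lemma convcomb1 y : convcomb (fun _ : 'I_1 => 1) (fun _ => y) y.
Proof. by split=> [i|]; [|split]; rewrite ?big_ord1 ?scale1r. Qed.

Lemma convcomb_dotp m (w : 'I_m -> R) (p : 'I_m -> V) x a :
  convcomb w p x -> dotp x a = \sum_(i < m) w i * dotp (p i) a.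
Proof.
by move=> [_ [_ ->]]; rewrite dotp_suml; apply: eq_bigr => i _; exact: dotpZl.
Qed.

Lemma convcomb_sum_const m (w : 'I_m -> R) (p : 'I_m -> V) x (c : R) :
  convcomb w p x -> \sum_(i < m) w i * c = c.
Proof. by move=> [_ [h _]]; rewrite -mulr_suml h mul1r. Qed.

Lemma convcomb_affine m (w : 'I_m -> R) (p : 'I_m -> V) x c a :
  convcomb w p x -> \sum_(i < m) w i * (c + dotp (p i) a) = c + dotp x a.
Proof.
move=> hc; under eq_bigr do rewrite mulrDr.
by rewrite big_split /= (convcomb_sum_const c hc) (convcomb_dotp _ hc).
Qed.

Lemma ler_convcomb m (w : 'I_m -> R) (p : 'I_m -> V) x (F G : 'I_m -> R) :
  convcomb w p x -> (forall i, F i <= G i) ->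
  \sum_(i < m) w i * F i <= \sum_(i < m) w i * G i.
Proof. by move=> hc h; apply: ler_sum => i _; rewrite ler_wpM2l // hc.1. Qed.

Lemma convex_set_convcomb S m (w : 'I_m -> R) (p : 'I_m -> V) x :
  convex_set S -> convcomb w p x -> (forall i, S (p i)) -> S x.
Proof.
move=> cS; elim: m w p x => [|m IH] w p x [w0 [w1 ->]] Sp.
  by move: w1; rewrite big_ord0 => /eqP; rewrite eq_sym oner_eq0.
move: w1; rewrite !big_ord_recr /=.
set wl := w ord_max; set s := \sum_(i < m) w (widen_ord (leqnSn m) i) => w1.
have s0 : 0 <= s by apply: sumr_ge0 => i _; exact: w0.
have [s_eq0|sn0] := eqVneq s 0.
  have wi0 (i : 'I_m) : w (widen_ord (leqnSn m) i) = 0.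
    exact: (psumr_eq0P (fun i _ => w0 (widen_ord (leqnSn m) i)) s_eq0).
  rewrite big1 ?add0r => [|i _]; last by rewrite wi0 scale0r.
  have -> : wl = 1 by move: w1; rewrite s_eq0 add0r.
  by rewrite scale1r.
have sp : 0 < s by rewrite lt_def sn0 s0.
set x' := \sum_(i < m) (w (widen_ord (leqnSn m) i) / s) *: p (widen_ord (leqnSn m) i).
have Sx' : S x'.
  apply: (IH (fun i => w (widen_ord (leqnSn m) i) / s)) (fun i => Sp _).
  split=> [i|]; first by rewrite /= divr_ge0.
  by split => //; rewrite -mulr_suml mulfV.
have -> : \sum_(i < m) w (widen_ord (leqnSn m) i) *: p (widen_ord (leqnSn m) i)
         = s *: x'.
  by rewrite /x' scaler_sumr; apply: eq_bigr => i _; rewrite scalerA mulrCA mulfV ?mulr1.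
have -> : s = 1 - wl by move: w1; lra.
by rewrite addrC; apply: cS => //; have := w0 ord_max; rewrite -/wl; lra.
Qed.

Lemma convex_set_of_hull S : conv_set S `<=` S -> convex_set S.
Proof.
move=> hS p q t Sp Sq /andP [t0 t1]; apply: hS.
exists 2%N, (fun i : 'I_2 => if i == ord0 then t else 1 - t),
  (fun i : 'I_2 => if i == ord0 then p else q); split; last by move=> i; case: ifP.
split; first by move=> i; case: ifP => _ //; lra.
by rewrite !big_ord_recl !big_ord0 /=; split; [lra|rewrite addr0].
Qed.

Definition fcat (T : Type) m1 m2 (a : 'I_m1 -> T) (b : 'I_m2 -> T) (i : 'I_(m1 + m2)) : T :=
  match fintype.split i with inl j => a j | inr j => b j end.

Lemma fcat_lshift (T : Type) m1 m2 (a : 'I_m1 -> T) (b : 'I_m2 -> T) j :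
  fcat a b (lshift m2 j) = a j.
Proof. by rewrite /fcat (unsplitK (inl j : 'I_m1 + 'I_m2)). Qed.

Lemma fcat_rshift (T : Type) m1 m2 (a : 'I_m1 -> T) (b : 'I_m2 -> T) j :
  fcat a b (rshift m1 j) = b j.
Proof. by rewrite /fcat (unsplitK (inr j : 'I_m1 + 'I_m2)). Qed.

Lemma convcomb_fcat m1 m2 (w1 : 'I_m1 -> R) (w2 : 'I_m2 -> R) p1 p2 x1 x2 (t : R) :
  0 <= t <= 1 -> convcomb w1 p1 x1 -> convcomb w2 p2 x2 ->
  convcomb (fcat (fun j => t * w1 j) (fun j => (1 - t) * w2 j)) (fcat p1 p2)
    (t *: x1 + (1 - t) *: x2).
Proof.
move=> /andP [t0 t1] [w10 [s1 ->]] [w20 [s2 ->]].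
split=> [i|]; first by rewrite /fcat; case: (fintype.split i) => j; rewrite mulr_ge0 ?subr_ge0.
rewrite !big_split_ord /=; split.
  under eq_bigr do rewrite fcat_lshift; under [X in _ + X = _]eq_bigr do rewrite fcat_rshift.
  by rewrite -!mulr_sumr s1 s2; lra.
under [X in _ = X + _]eq_bigr do rewrite !fcat_lshift.
under [X in _ = _ + X]eq_bigr do rewrite !fcat_rshift.
by rewrite !scaler_sumr; congr (_ + _); apply: eq_bigr => i _; rewrite scalerA.
Qed.

End ConvexCombinations.

Section Sequences.
Variables (R : realType) (n : nat).
Local Notation V := 'rV[R]_n.

Lemma le_rcvg (a : nat -> R) l c : rcvg a l -> (forall k, a k <= c) -> l <= c.
Proof.
move=> ha hk; rewrite leNgt; apply/negP => cl.
have [|N hN] := ha (l - c); first by rewrite subr_gt0.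
by have := hN N (leqnn N); have := hk N; rewrite ltr_norml; lra.
Qed.

Lemma rcvg_cst (c : R) : rcvg (fun _ => c) c.
Proof. by move=> e e0; exists 0%N => k _; rewrite subrr normr0. Qed.

Lemma vcvg_cst (c : V) : vcvg (fun _ => c) c.
Proof. by move=> e e0; exists 0%N => k _; rewrite subrr enorm0. Qed.

Lemma rcvgD (a b : nat -> R) la lb :
  rcvg a la -> rcvg b lb -> rcvg (fun k => a k + b k) (la + lb).
Proof.
move=> ha hb e e0; have e2 : 0 < e / 2 by rewrite divr_gt0.
have [[N1 h1] [N2 h2]] := (ha _ e2, hb _ e2).
exists (maxn N1 N2) => k hk.
have := h1 k (leq_trans (leq_maxl _ _) hk); have := h2 k (leq_trans (leq_maxr _ _) hk).
have -> : a k + b k - (la + lb) = (a k - la) + (b k - lb) by ring.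
by move=> u v; apply: le_lt_trans (ler_normD _ _) _; lra.
Qed.

Lemma rcvgMl (a : nat -> R) l (c : R) : rcvg a l -> rcvg (fun k => c * a k) (c * l).
Proof.
move=> ha e e0; have cp : 0 < `|c| + 1 by have := normr_ge0 c; lra.
have [N h] := ha (e / (`|c| + 1)) (divr_gt0 e0 cp).
exists N => k hk; rewrite -mulrBr normrM.
have := h k hk; rewrite ltr_pdivlMr // => hh.
by have := normr_ge0 c; have := normr_ge0 (a k - l); nra.
Qed.

Lemma rcvg_dotp (a b : nat -> V) la lb :
  vcvg a la -> vcvg b lb -> rcvg (fun k => dotp (a k) (b k)) (dotp la lb).
Proof.
move=> ha hb e e0.
set ea := enorm la; set eb := enorm lb.
have [ea0 eb0] : 0 <= ea /\ 0 <= eb by rewrite !enorm_ge0.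
have K0 : 0 < 1 + ea + eb by lra.
set d := Num.min 1 (e / (1 + ea + eb)).
have d0 : 0 < d by rewrite lt_min ltr01 divr_gt0.
have d1 : d <= 1 by rewrite ge_min lexx.
have de : d * (1 + ea + eb) <= e by rewrite -ler_pdivlMr // ge_min lexx orbT.
have [[N1 h1] [N2 h2]] := (ha _ d0, hb _ d0).
exists (maxn N1 N2) => k hk.
have A := h1 k (leq_trans (leq_maxl _ _) hk).
have B := h2 k (leq_trans (leq_maxr _ _) hk).
have -> : dotp (a k) (b k) - dotp la lb =
    dotp (a k - la) (b k - lb) + dotp (a k - la) lb + dotp la (b k - lb).
  by rewrite !dotpBl !dotpBr; ring.
set A' := enorm (a k - la) in A *; set B' := enorm (b k - lb) in B *.
have [A0 B0] : 0 <= A' /\ 0 <= B' by rewrite !enorm_ge0.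
have c1 := dotp_cauchy_schwarz (a k - la) (b k - lb).
have c2 := dotp_cauchy_schwarz (a k - la) lb.
have c3 := dotp_cauchy_schwarz la (b k - lb).
rewrite -/A' -/B' -/ea -/eb in c1 c2 c3.
apply: le_lt_trans (ler_normD _ _) _.
apply: le_lt_trans (lerD (ler_normD _ _) (lexx _)) _.
have h3 : A' * B' <= A' by rewrite ler_piMr //; apply: ltW; apply: lt_le_trans B d1.
have h4 : A' * eb <= d * eb by rewrite ler_wpM2r // ltW.
have h5 : ea * B' <= ea * d by rewrite ler_wpM2l // ltW.
nra.
Qed.

Lemma vcvgD (a b : nat -> V) la lb :
  vcvg a la -> vcvg b lb -> vcvg (fun k => a k + b k) (la + lb).
Proof.
move=> ha hb e e0; have e2 : 0 < e / 2 by rewrite divr_gt0.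
have [[N1 h1] [N2 h2]] := (ha _ e2, hb _ e2).
exists (maxn N1 N2) => k hk.
have := h1 k (leq_trans (leq_maxl _ _) hk); have := h2 k (leq_trans (leq_maxr _ _) hk).
rewrite opprD addrACA => u v.
by apply: le_lt_trans (ler_enormD _ _) _; lra.
Qed.

Lemma vcvgZ (a : nat -> V) l (c : R) : vcvg a l -> vcvg (fun k => c *: a k) (c *: l).
Proof.
move=> ha e e0; have cp : 0 < `|c| + 1 by have := normr_ge0 c; lra.
have [N h] := ha (e / (`|c| + 1)) (divr_gt0 e0 cp).
exists N => k hk; rewrite -scalerBr enormZ.
have := h k hk; rewrite ltr_pdivlMr // => hh.
by have := normr_ge0 c; have := enorm_ge0 (a k - l); nra.
Qed.

End Sequences.

Section Continuity.
Variables (R : realType) (n : nat).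
Local Notation V := 'rV[R]_n.
Implicit Types (r s : V -> R).

Definition econtinuous r := forall y (e : R), 0 < e ->
  exists2 d : R, 0 < d & forall y', enorm (y' - y) < d -> `|r y' - r y| < e.

Lemma econtinuous_cst c : econtinuous (fun _ => c).
Proof. by move=> y e e0; exists 1 => // y' _; rewrite subrr normr0. Qed.

Lemma econtinuous_dotp (a : V) : econtinuous (dotp a).
Proof.
move=> y e e0; have ea0 := enorm_ge0 a.
exists (e / (enorm a + 1)) => [|y' hy]; first by rewrite divr_gt0 //; lra.
rewrite -dotpBr; apply: le_lt_trans (dotp_cauchy_schwarz _ _) _.
by move: hy; rewrite ltr_pdivlMr; [have := enorm_ge0 (y' - y); nra|lra].
Qed.

Lemma econtinuous_sqn : econtinuous (@sqn R n).
Proof.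
move=> y e e0; set ey := enorm y.
have ey0 : 0 <= ey by apply: enorm_ge0.
have K0 : 0 < 1 + 2 * ey by lra.
set d := Num.min 1 (e / (1 + 2 * ey)).
have d0 : 0 < d by rewrite lt_min ltr01 divr_gt0.
have d1 : d <= 1 by rewrite ge_min lexx.
have de : d * (1 + 2 * ey) <= e by rewrite -ler_pdivlMr // ge_min lexx orbT.
exists d => // y' hy.
have -> : sqn y' - sqn y = sqn (y' - y) + 2 * dotp y (y' - y).
  by rewrite sqnB dotpBr /sqn (dotpC y' y); ring.
set D := enorm (y' - y) in hy *.
have D0 : 0 <= D by apply: enorm_ge0.
have cs := dotp_cauchy_schwarz y (y' - y); rewrite -/D -/ey in cs.
apply: le_lt_trans (ler_normD _ _) _.
rewrite ger0_norm ?sqn_ge0 // -sqr_enorm -/D normrM ger0_norm //.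
have : D ^+ 2 <= D by rewrite expr2 ler_piMr //; apply: ltW; apply: lt_le_trans hy d1.
nra.
Qed.

Lemma econtinuousD r s : econtinuous r -> econtinuous s -> econtinuous (r \+ s).
Proof.
move=> hr hs y e e0; have e2 : 0 < e / 2 by rewrite divr_gt0.
have [d1 d10 h1] := hr y _ e2; have [d2 d20 h2] := hs y _ e2.
exists (Num.min d1 d2) => [|y']; first by rewrite lt_min d10 d20.
rewrite lt_min => /andP [a b]; have := h1 _ a; have := h2 _ b.
have -> : (r \+ s) y' - (r \+ s) y = (r y' - r y) + (s y' - s y) by rewrite /=; ring.
by move=> u v; apply: le_lt_trans (ler_normD _ _) _; lra.
Qed.

Lemma econtinuousMl r c : econtinuous r -> econtinuous (fun y => c * r y).
Proof.
move=> hr y e e0; have cp : 0 < `|c| + 1 by have := normr_ge0 c; lra.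
have [d d0 h] := hr y (e / (`|c| + 1)) (divr_gt0 e0 cp).
exists d => // y' hy; rewrite -mulrBr normrM.
have := h y' hy; rewrite ltr_pdivlMr // => hh.
by have := normr_ge0 c; have := normr_ge0 (r y' - r y); nra.
Qed.

Lemma econtinuous_quadratic (a : R) (b : V) (c : R) :
  econtinuous (fun y => a * sqn y + dotp b y + c).
Proof.
apply: econtinuousD (econtinuous_cst c); apply: econtinuousD (econtinuous_dotp b).
exact: econtinuousMl econtinuous_sqn.
Qed.

Lemma econtinuous_sqnB (x : V) : econtinuous (fun y => sqn (y - x)).
Proof.
have -> : (fun y => sqn (y - x)) = (fun y => 1 * sqn y + dotp (- 2 *: x) y + sqn x).
  by apply: funext => y; rewrite sqnB dotpZl (dotpC x y); ring.
exact: econtinuous_quadratic.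
Qed.

End Continuity.

Section LowerSemicontinuity.
Variables (R : realType) (n : nat).
Local Notation V := 'rV[R]_n.
Implicit Types (phi : V -> \bar R) (S : set V).

Definition eclosed S := forall y, ~ S y ->
  exists2 d : R, 0 < d & forall y', enorm (y' - y) < d -> ~ S y'.

Definition coercive phi := exists2 c : R, 0 < c &
  exists C : R, forall y, ((c * sqn y - C)%:E <= phi y)%E.

Lemma lscD_econtinuous phi (r : V -> R) :
  lsc phi -> econtinuous r -> lsc (fun y => (phi y + (r y)%:E)%E).
Proof.
move=> hphi hr x a ha.
have h1 : ((a - r x)%:E < phi x)%E.
  by move: ha; case: (phi x) => [v| |] //=; rewrite ?lte_fin ?ltry //; lra.
have [b ab bphi] := ltEFin_dense h1.
have [d1 d10 hd1] := hphi x b bphi.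
have [d2 d20 hd2] := hr x (b - (a - r x)) (ltac:(by rewrite subr_gt0)).
exists (Num.min d1 d2) => [|y]; first by rewrite lt_min d10 d20.
rewrite lt_min => /andP [y1 y2]; have := hd1 y y1; have := hd2 y y2.
case: (phi y) => [v| |] //=; rewrite ?lte_fin ?ltry //.
by rewrite ltr_norml => /andP [u1 u2] u3; lra.
Qed.

Lemma lsc_EFin (r : V -> R) : econtinuous r -> lsc (fun y => (r y)%:E).
Proof.
move=> hr x a; rewrite lte_fin => ha.
have [d d0 hd] := hr x (r x - a) (ltac:(by rewrite subr_gt0)).
exists d => // y hy; rewrite lte_fin.
by have := hd y hy; rewrite ltr_norml => /andP [u1 u2]; lra.
Qed.

Lemma lsc_restrict phi S :
  lsc phi -> eclosed S -> lsc (fun y => if `[< S y >] then phi y else +oo%E).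
Proof.
move=> hphi hS x a; case: (asboolP (S x)) => Sx ha.
  have [d d0 hd] := hphi x a ha.
  exists d => // y hy; case: (asboolP (S y)) => _; last by rewrite ltry.
  exact: hd.
have [d d0 hd] := hS x Sx.
exists d => // y hy; case: (asboolP (S y)) => Sy; last by rewrite ltry.
by have := hd y hy.
Qed.

Lemma eclosed_sublevel phi (c : R) : lsc phi -> eclosed (fun y => (phi y <= c%:E)%E).
Proof.
move=> hphi y /negP; rewrite -ltNge => h.
have [d d0 hd] := hphi y c h.
by exists d => // y' hy; apply/negP; rewrite -ltNge; exact: hd.
Qed.

Lemma eclosed_halfspace (u : V) (g : R) : eclosed (fun y => g <= dotp u y).
Proof.
move=> y /negP; rewrite -ltNge => h.
have gd : 0 < g - dotp u y by rewrite subr_gt0.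
have [d d0 hd] := econtinuous_dotp u y gd.
exists d => // y' hy; have := hd y' hy; rewrite ltr_norml => /andP [u1 u2].
lra.
Qed.

Lemma nbhs_enorm_ball (y : V) (d : R) : 0 < d -> nbhs y [set z | enorm (z - y) < d].
Proof.
move=> d0; apply/nbhs_ballP.
have n1 : 0 < n.+1%:R :> R by rewrite ltr0n.
set e := d / n.+1%:R; have e0 : 0 < e by rewrite divr_gt0.
exists e => // z [_ hz] /=; rewrite enorm_lt_sqn // /sqn /dotp.
have hi i : (z - y) 0 i * (z - y) 0 i <= e ^+ 2.
  have := hz ord0 i; rewrite -ball_normE /ball_ /= => h.
  rewrite -expr2 -real_normK ?num_real // -normrN.
  by rewrite lerXn2r ?nnegrE ?normr_ge0 ?ltW // !mxE opprB.
apply: le_lt_trans (ler_sum _ (fun i _ => hi i)) _.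
rewrite sumr_const card_ord -mulr_natr.
have ed : e * (n%:R + 1) = d by rewrite natr1 /e mulfVK ?gt_eqF.
have : 0 <= n%:R :> R by rewrite ler0n.
by rewrite -ed; nra.
Qed.

Lemma abs_coord_le (u : V) (r : R) i : sqn u <= r -> `|u 0 i| <= 1 + r.
Proof.
move=> hu; have := sqn_coord u i; rewrite -real_normK ?num_real // => hc.
by have := sqr_ge0 (`|u 0 i| - 1); nra.
Qed.

Lemma coercive_inf_fin_num phi : coercive phi -> (exists x0, (phi x0 < +oo)%E) ->
  ereal_inf [set phi y | y in [set: V]] \is a fin_num.
Proof.
move=> [c c0 [C hC]] [x0 hx0]; rewrite fin_numE; apply/andP; split; apply/eqP => me.
  have : ((- C)%:E <= ereal_inf [set phi y | y in [set: V]])%E.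
    apply: le_ereal_inf_tmp => _ [y _ <-]; apply: le_trans (hC y); rewrite lee_fin.
    by have := sqn_ge0 y; nra.
  by rewrite me.
have := @ereal_inf_lbound _ [set phi y | y in [set: V]] (phi x0) (ltac:(by exists x0)).
by rewrite me leye_eq => /eqP h; move: hx0; rewrite h.
Qed.

(* The sublevel sets [phi <= inf phi + e] form a proper filter living in a compact
   box; lower semicontinuity forces its cluster point to be a minimizer. *)
Lemma lsc_coercive_min phi : lsc phi -> coercive phi -> (exists x0, (phi x0 < +oo)%E) ->
  exists ys, forall y, (phi ys <= phi y)%E.
Proof.
move=> hphi hco hx0; have mfin := coercive_inf_fin_num hco hx0.
move: hco mfin => [c c0 [C hC]]; set m := ereal_inf _ => mfin.
have mle y : (m <= phi y)%E by apply: ereal_inf_lbound; exists y.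
pose B (e : R) := [set y | (phi y <= (fine m + e)%:E)%E].
pose F := filter_from [set e : R | 0 < e] B.
have FP : ProperFilter F.
  apply: filter_from_proper => [|e e0].
    apply: filter_from_filter; first by exists 1; rewrite /= ltr01.
    move=> i j i0 j0; exists (Num.min i j); first by rewrite /= lt_min i0 j0.
    by move=> y /= hy; split; apply: le_trans hy _; rewrite lee_fin lerD2l ge_min lexx ?orbT.
  have [_ [y _ <-] hy] := lb_ereal_inf_adherent e0 mfin.
  by exists y; rewrite /B /= EFinD fineK //; apply: ltW.
set b := 1 + (fine m + 1 + C) / c.
set K := [set v : V | forall i, `[- b, b]%classic (v ord0 i)].
have cK : compact K.
  exact: (@rV_compact R n (fun=> `[- b, b]%classic) (fun=> @segment_compact R (-b) b)).
have FK : F K.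
  exists 1 => [|y /= hy i]; first by rewrite /= ltr01.
  rewrite /= in_itv /= -ler_norml [ord0]ord1 /b; apply: abs_coord_le.
  rewrite ler_pdivlMr //; have := le_trans (hC y) hy; rewrite lee_fin; lra.
have [ys [_ hys]] := cK F FP FK.
exists ys => y; apply: le_trans (mle y).
rewrite leNgt -(fineK mfin); apply/negP => hlt.
have [bb mb hbb] := ltEFin_dense hlt.
have [d d0 hd] := hphi ys bb hbb.
have FB : F (B (bb - fine m)) by exists (bb - fine m) => //=; rewrite subr_gt0.
have [z [Bz nz]] := hys _ _ FB (nbhs_enorm_ball ys d0).
by have := hd z nz; rewrite ltNge; move: Bz; rewrite /B /= addrC subrK => ->.
Qed.

Lemma lsc_coercive_min_on phi S : lsc phi -> coercive phi -> eclosed S ->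
  (exists2 x0, S x0 & (phi x0 < +oo)%E) ->
  exists2 ys, S ys & forall y, S y -> (phi ys <= phi y)%E.
Proof.
move=> hphi [c c0 [C hC]] hS [x0 Sx0 hx0].
pose psi y := if `[< S y >] then phi y else +oo%E.
have psiS y : S y -> psi y = phi y by rewrite /psi; case: asboolP.
have [|||ys hys] := @lsc_coercive_min psi; first exact: (lsc_restrict hphi hS).
- exists c => //; exists C => y; rewrite /psi; case: asboolP => _ //; exact: leey.
- by exists x0; rewrite psiS.
have Sys : S ys.
  apply: contrapT => nS; have := hys x0; rewrite (psiS x0 Sx0) /psi.
  by case: asboolP => [/nS []|_]; rewrite leye_eq => /eqP h; move: hx0; rewrite h.
by exists ys => // y Sy; rewrite -(psiS ys Sys) -(psiS y Sy).
Qed.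

Lemma eclosed_convex_projection S x : eclosed S -> convex_set S -> S !=set0 ->
  exists2 p, S p & forall q, S q -> dotp (x - p) (q - p) <= 0.
Proof.
move=> Scl Scvx [q0 Sq0].
have [||||p Sp hp] := @lsc_coercive_min_on (fun y => (sqn (y - x))%:E) S.
- exact/lsc_EFin/econtinuous_sqnB.
- exists (1 / 2); first lra.
  exists (sqn x) => y; rewrite lee_fin sqnB.
  have := dotp_young y (- x) (ltac:(lra) : 0 < 1 / 4).
  have -> : sqn (- x) / (4 * (1 / 4)) = sqn x by rewrite sqnN; field.
  by rewrite dotpNr (dotpC y x); lra.
- exact: Scl.
- by exists q0 => //; rewrite ltry.
exists p => // q Sq.
apply: (@le0_of_le_scale _ _ (sqn (q - p) / 2)) => t t0 t1.
have := hp (t *: q + (1 - t) *: p) (Scvx q p t Sq Sp (ltac:(by rewrite t1 ltW))).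
have -> : t *: q + (1 - t) *: p - x = (p - x) + t *: (q - p).
  by apply/rowP => i; rewrite !mxE; ring.
rewrite /= lee_fin (sqnD (p - x)) sqnZ dotpZr -opprB dotpNl; nra.
Qed.

End LowerSemicontinuity.

Section Subgradients.
Variables (R : realType) (n : nat).
Local Notation V := 'rV[R]_n.
Implicit Types (phi : V -> \bar R) (x v : V).

Definition subgrad phi x v := forall y, (phi x + (dotp v (y - x))%:E <= phi y)%E.

Lemma fin_num_dom phi x : phi x \is a fin_num -> dom phi x.
Proof. by rewrite fin_numElt => /andP [_]. Qed.

(* Compare phi on the segment [x, y] near x, where the Frechet inequality holds,
   with the chord. *)
Lemma convex_frechet_subgrad phi x v :
  convex_fun phi -> (forall y, phi y != -oo%E) -> frechet_subdiff phi x v ->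
  subgrad phi x v.
Proof.
move=> cphi ninf [xfin hfr] y.
have := ninf y; case Ey: (phi y) => [b| |] // _; last by rewrite leey.
rewrite -(fineK xfin) -EFinD lee_fin; set a := fine (phi x).
set e := enorm (y - x); have e0 : 0 <= e by apply: enorm_ge0.
apply/ler_addgt0Pr => eta eta0; have e1 : 0 < e + 1 by lra.
set eps := eta / (e + 1); have eps0 : 0 < eps by rewrite divr_gt0.
have epse : eps * e <= eta.
  by rewrite /eps mulrAC ler_pdivrMr // ler_wpM2l ?(ltW eta0) //; lra.
have [d d0 hd] := hfr eps eps0.
set t := d / (d + e); have de : 0 < d + e by lra.
have t0 : 0 < t by rewrite divr_gt0.
have t1 : t <= 1 by rewrite ler_pdivrMr // mul1r; lra.
have te : t * e < d.
  have dd : 0 < d * d by rewrite mulr_gt0.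
  by rewrite /t mulrAC ltr_pdivrMr //; nra.
set z := t *: y + (1 - t) *: x.
have zx : z - x = t *: (y - x).
  by rewrite /z scalerBr scalerBl scale1r addrA (addrAC _ x) addrK.
have ez : enorm (z - x) = t * e by rewrite zx enormZ ger0_norm // ltW.
have h1 := hd z (ltac:(by rewrite ez)); rewrite ez zx dotpZr -/a in h1.
have h2 : (phi z <= t%:E * phi y + (1 - t)%:E * phi x)%E.
  apply: cphi; last by rewrite t1 ltW.
    by rewrite /dom /= Ey ltry.
  by rewrite /dom /= -(fineK xfin) ltry.
rewrite Ey -(fineK xfin) -!EFinM -EFinD -/a in h2.
have := le_trans h1 h2; rewrite lee_fin => h3.
have : t * (a + dotp v (y - x) - eps * e) <= t * b by lra.
by rewrite ler_pM2l //; lra.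
Qed.

Lemma subgrad_limit phi (xs vs : nat -> V) x v :
  (forall k, phi (xs k) \is a fin_num /\ subgrad phi (xs k) (vs k)) ->
  vcvg xs x -> vcvg vs v -> rcvg (fun k => fine (phi (xs k))) (fine (phi x)) ->
  phi x \is a fin_num -> subgrad phi x v.
Proof.
move=> hk cx cv cphi xfin y.
have [fin0 h0] := hk 0%N.
have := h0 y; rewrite -(fineK fin0) -EFinD.
case Ey: (phi y) => [b| |] // _; last by rewrite leey.
rewrite -(fineK xfin) -EFinD lee_fin.
have -> : fine (phi x) + dotp v (y - x) = fine (phi x) + (dotp v y + (-1) * dotp v x).
  by rewrite dotpBr mulN1r.
apply: (le_rcvg (a := fun k =>
  fine (phi (xs k)) + (dotp (vs k) y + (-1) * dotp (vs k) (xs k)))).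
  apply: rcvgD => //; apply: rcvgD; last exact/rcvgMl/rcvg_dotp.
  exact/rcvg_dotp/vcvg_cst.
move=> k; have [fk hk'] := hk k.
by have := hk' y; rewrite -(fineK fk) -EFinD Ey lee_fin dotpBr mulN1r.
Qed.

Lemma convex_lim_subgrad phi x v :
  convex_fun phi -> (forall y, phi y != -oo%E) -> lim_subdiff phi x v -> subgrad phi x v.
Proof.
move=> cphi ninf [xfin [xs [vs [cx [cf [fr cv]]]]]].
apply: (subgrad_limit (xs := xs) (vs := vs)) => // k.
by split; [case: (fr k)|exact: convex_frechet_subgrad].
Qed.

Lemma subgrad_frechet phi x v :
  phi x \is a fin_num -> subgrad phi x v -> frechet_subdiff phi x v.
Proof.
move=> xfin h; split => // eps eps0; exists 1 => // y _.
apply: le_trans (h y); rewrite -{2}(fineK xfin) -EFinD lee_fin.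
by have := enorm_ge0 (y - x); nra.
Qed.

Lemma frechet_lim_subdiff phi x v : frechet_subdiff phi x v -> lim_subdiff phi x v.
Proof.
move=> hf; split; first by case: hf.
exists (fun _ => x), (fun _ => v); do !split => //.
- exact: vcvg_cst.
- exact: rcvg_cst.
- exact: vcvg_cst.
Qed.

End Subgradients.

Section ConvexHullFunction.
Variables (R : realType) (n : nat) (phi : 'rV[R]_n -> \bar R).
Local Notation V := 'rV[R]_n.
Hypothesis phi_ninf : forall y, phi y != -oo%E.

Definition wsum m (w : 'I_m -> R) (p : 'I_m -> V) :=
  (\sum_(i < m) (w i)%:E * phi (p i))%E.

Lemma wterm_neq_ninf (w : R) y : 0 <= w -> (w%:E * phi y)%E != -oo%E.
Proof.
move=> w0; have := phi_ninf y; case: (phi y) => [r| |] //= _.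
rewrite mulry; have [->|wn0] := eqVneq w 0; first by rewrite sgr0 mul0e.
by rewrite gtr0_sg ?mul1e // lt_def wn0 w0.
Qed.

Lemma wtermE (w : R) y : (w != 0 -> dom phi y) -> (w%:E * phi y)%E = (w * fine (phi y))%:E.
Proof.
have [->|wn0 /(_ isT)] := eqVneq w 0; first by rewrite mul0e mul0r.
by rewrite /dom /=; have := phi_ninf y; case: (phi y).
Qed.

Lemma wsum_fin m (w : 'I_m -> R) (p : 'I_m -> V) :
  (forall i, 0 <= w i) -> (wsum w p < +oo)%E ->
  (forall i, w i != 0 -> dom phi (p i)) /\
  wsum w p = (\sum_(i < m) w i * fine (phi (p i)))%:E.
Proof.
move=> w0 hs.
have hd i : w i != 0 -> dom phi (p i).
  move=> wn0; rewrite /dom /= ltNge leye_eq; apply/negP => /eqP pinf.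
  suff : wsum w p = +oo%E by move=> e; move: hs; rewrite e ltxx.
  apply/esum_eqyP => [j _|]; first exact: wterm_neq_ninf.
  by exists i; rewrite mem_index_enum pinf mulry gtr0_sg ?mul1e // lt_def wn0 w0.
by split => //; rewrite /wsum -sumEFin; apply: eq_bigr => i _; exact: wtermE (hd i).
Qed.

Lemma conv_fun_le_wsum m (w : 'I_m -> R) (p : 'I_m -> V) x :
  convcomb w p x -> (conv_fun phi x <= wsum w p)%E.
Proof. by move=> h; apply: ereal_inf_lbound; exists m, w, p. Qed.

Lemma conv_fun_le x : (conv_fun phi x <= phi x)%E.
Proof.
by apply: le_trans (conv_fun_le_wsum (convcomb1 x)) _; rewrite /wsum big_ord1 mul1e.
Qed.

Lemma conv_fun_ge_affine (c : R) (a : V) :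
  (forall p, dom phi p -> c + dotp a p <= fine (phi p)) ->
  forall y, ((c + dotp a y)%:E <= conv_fun phi y)%E.
Proof.
move=> h y; apply: le_ereal_inf_tmp => _ [m [w [p [hc ->]]]].
change ((c + dotp a y)%:E <= wsum w p)%E.
have [->|] := eqVneq (wsum w p) +oo%E; first by rewrite leey.
rewrite -ltey => hlt; have [hd ->] := wsum_fin hc.1 hlt.
rewrite lee_fin (dotpC a y) -(convcomb_affine c a hc); apply: ler_sum => i _.
have [->|wn0] := eqVneq (w i) 0; first by rewrite !mul0r.
by rewrite ler_wpM2l ?(hc.1 i) // dotpC; apply/h/hd.
Qed.

Lemma conv_fun_lt x (c : R) : (conv_fun phi x < c%:E)%E ->
  exists m (w : 'I_m -> R) (p : 'I_m -> V), convcomb w p x /\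
    (forall i, w i != 0 -> dom phi (p i)) /\
    \sum_(i < m) w i * fine (phi (p i)) < c.
Proof.
move=> /ereal_inf_lt [_ [m [w [p [hc ->]]]] hlt].
have [hd hE] := wsum_fin hc.1 (lt_trans hlt (ltry c)).
exists m, w, p; do 2!split => //.
by move: hlt; rewrite -/(wsum w p) hE lte_fin.
Qed.

Hypothesis conv_ninf : forall y, conv_fun phi y != -oo%E.

(* Concatenate near-optimal convex combinations for x1 and x2, weighted by t and 1 - t. *)
Lemma conv_fun_convex : convex_fun (conv_fun phi).
Proof.
move=> x1 x2 t d1 d2 ht; have /andP [t0 t1] := ht.
have fin y : dom (conv_fun phi) y -> conv_fun phi y \is a fin_num.
  by rewrite fin_numE conv_ninf /dom /= => /lt_eqF ->.
have [f1 f2] := (fin _ d1, fin _ d2).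
rewrite -(fineK f1) -(fineK f2) -!EFinM -EFinD.
set C1 := fine _; set C2 := fine _.
apply/lee_addgt0Pr => e e0; rewrite -EFinD.
have [m1 [w1 [p1 [c1 [h1 s1]]]]] := @conv_fun_lt x1 (C1 + e)
  (ltac:(by rewrite /C1 EFinD fineK // lteDl // lte_fin)).
have [m2 [w2 [p2 [c2 [h2 s2]]]]] := @conv_fun_lt x2 (C2 + e)
  (ltac:(by rewrite /C2 EFinD fineK // lteDl // lte_fin)).
have hc := convcomb_fcat ht c1 c2.
apply: le_trans (conv_fun_le_wsum hc) _.
have -> : wsum (fcat (fun j => t * w1 j) (fun j => (1 - t) * w2 j)) (fcat p1 p2) =
    (t * \sum_(i < m1) w1 i * fine (phi (p1 i)) +
     (1 - t) * \sum_(i < m2) w2 i * fine (phi (p2 i)))%:E.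
  rewrite /wsum big_split_ord /=.
  under eq_bigr do rewrite !fcat_lshift; under [X in (_ + X)%E]eq_bigr do rewrite !fcat_rshift.
  rewrite !mulr_sumr EFinD -!sumEFin; congr (_ + _)%E; apply: eq_bigr => i _.
    by rewrite wtermE ?mulrA // mulf_eq0 negb_or => /andP [_ /h1].
  by rewrite wtermE ?mulrA // mulf_eq0 negb_or => /andP [_ /h2].
rewrite lee_fin.
have : t * \sum_(i < m1) w1 i * fine (phi (p1 i)) <= t * (C1 + e) by rewrite ler_wpM2l // ltW.
have : (1 - t) * \sum_(i < m2) w2 i * fine (phi (p2 i)) <= (1 - t) * (C2 + e).
  by rewrite ler_wpM2l ?subr_ge0 // ltW.
lra.
Qed.

End ConvexHullFunction.

Section ProximalSubgradients.
Variables (R : realType) (n : nat) (f : 'rV[R]_n -> \bar R) (lam : R).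
Local Notation V := 'rV[R]_n.
Local Notation g := (add_j f lam).
Hypothesis fproper : proper_fun f.
Hypothesis lam_gt0 : 0 < lam.

Definition gfin (y : V) := fine (f y) + lam^-1 * jfun y.

Definition gsubgrad (x w : V) :=
  dom f x /\ forall y, dom f y -> gfin x + dotp w (y - x) <= gfin y.

Lemma f_neq_ninf y : f y != -oo%E.
Proof. by case: fproper. Qed.

Lemma dom_fE y : dom f y -> f y = (fine (f y))%:E.
Proof. by rewrite /dom /=; have := f_neq_ninf y; case: (f y). Qed.

Lemma notdom_fE y : ~ dom f y -> f y = +oo%E.
Proof.
by rewrite /dom /=; have := f_neq_ninf y; case: (f y) => // r _ []; exact: ltry.
Qed.

Lemma add_jE y : dom f y -> g y = (gfin y)%:E.
Proof. by move=> /dom_fE; rewrite /add_j /gfin => ->; rewrite EFinD. Qed.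

Lemma dom_add_j y : dom g y <-> dom f y.
Proof.
rewrite /dom /add_j /=; have := f_neq_ninf y.
by case: (f y) => //= r _; split => // _; exact: ltry.
Qed.

Lemma add_j_neq_ninf y : g y != -oo%E.
Proof. by rewrite /add_j; have := f_neq_ninf y; case: (f y). Qed.

Lemma pen_ge0 (x y : V) : 0 <= pen lam x y.
Proof. by rewrite /pen divr_ge0 ?sqn_ge0 // mulr_ge0 // ltW. Qed.

Lemma penE (z y : V) :
  pen lam z y = lam^-1 * jfun y - lam^-1 * dotp z y + lam^-1 * jfun z.
Proof. by rewrite /jfun /pen sqnB (dotpC y z); field; rewrite gt_eqF. Qed.

Lemma jfun_taylor (x y : V) :
  lam^-1 * jfun y = lam^-1 * jfun x + dotp (lam^-1 *: x) (y - x) + pen lam x y.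
Proof.
rewrite /jfun /pen dotpZl.
have -> : sqn y = sqn (x + (y - x)) by rewrite addrCA subrr addr0.
by rewrite sqnD; field; rewrite gt_eqF.
Qed.

Lemma pen_le_small (x y : V) (eps : R) : 0 < eps -> enorm (y - x) < 2 * lam * eps ->
  pen lam x y <= eps * enorm (y - x).
Proof.
move=> e0 h; rewrite /pen -sqr_enorm.
have l2 : 0 < 2 * lam by rewrite mulr_gt0.
have := enorm_ge0 (y - x); move: h; set e := enorm (y - x) => h e0'.
by rewrite ler_pdivrMr //; nra.
Qed.

Lemma prox_subdiffP x v : prox_subdiff f lam x v <-> gsubgrad x (v + lam^-1 *: x).
Proof.
split=> [[dx h]|[dx h]]; split=> // y; first move=> dy.
  have := h y; rewrite (dom_fE dx) (dom_fE dy) -EFinD lee_fin /gfin (jfun_taylor x y).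
  by rewrite dotpDl; lra.
have [dy|ndy] := pselect (dom f y); last by rewrite (notdom_fE ndy) leey.
have := h y dy; rewrite (dom_fE dx) (dom_fE dy) -EFinD lee_fin /gfin (jfun_taylor x y).
by rewrite dotpDl; lra.
Qed.

Lemma proxP z y : prox f lam z y <-> dom f y /\
  forall y', dom f y' -> gfin y - lam^-1 * dotp z y <= gfin y' - lam^-1 * dotp z y'.
Proof.
split=> [h|[dy h] y'].
  have dy : dom f y.
    have [x1 hx1] := fproper.2.
    have := h x1; rewrite (dom_fE hx1) -EFinD /dom /=.
    by have := f_neq_ninf y; case: (f y) => //= r _ _; exact: ltry.
  split => // y' dy'.
  by have := h y'; rewrite (dom_fE dy) (dom_fE dy') -!EFinD lee_fin !penE /gfin; lra.
have [dy'|ndy] := pselect (dom f y'); last by rewrite (notdom_fE ndy) leey.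
by have := h y' dy'; rewrite (dom_fE dy) (dom_fE dy') -!EFinD lee_fin !penE /gfin; lra.
Qed.

Lemma prox_subdiff_frechet x v : prox_subdiff f lam x v -> frechet_subdiff f x v.
Proof.
move=> [dx h]; split; first by rewrite (dom_fE dx).
move=> eps e0; exists (2 * lam * eps) => [|y hy]; first by rewrite !mulr_gt0.
apply: le_trans (h y); rewrite (dom_fE dx) -EFinD lee_fin.
by have := pen_le_small e0 hy; lra.
Qed.

Lemma prox_lim_subdiff x v : prox_subdiff f lam x v -> lim_subdiff f x v.
Proof. by move=> /prox_subdiff_frechet/frechet_lim_subdiff. Qed.

Lemma frechet_subdiff_add_j x v : frechet_subdiff f x v ->
  frechet_subdiff g x (v + lam^-1 *: x).
Proof.
move=> [xfin h]; have dx := fin_num_dom xfin.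
split=> [|eps e0]; first by rewrite add_jE.
have [d d0 hd] := h eps e0; exists d => // y hy.
have [dy|ndy] := pselect (dom f y); last by rewrite /add_j (notdom_fE ndy) leey.
move: (hd y hy); rewrite (add_jE dx) (add_jE dy) (dom_fE dy) /= !lee_fin.
rewrite /gfin (jfun_taylor x y) dotpDl.
by have := pen_ge0 x y; lra.
Qed.

Lemma lim_subdiff_add_j x v : lim_subdiff f x v ->
  lim_subdiff g x (v + lam^-1 *: x).
Proof.
move=> [xfin [xs [vs [cx [cf [fr cv]]]]]].
have dx := fin_num_dom xfin.
have dk k : dom f (xs k) by case: (fr k) => /fin_num_dom.
split; first by rewrite add_jE.
exists xs, (fun k => vs k + lam^-1 *: xs k); do 2!split => //.
  have gE y : dom f y -> fine (g y) = fine (f y) + (lam^-1 / 2) * dotp y y.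
    by move=> dy; rewrite (add_jE dy) /= /gfin /jfun /sqn; congr (_ + _); ring.
  rewrite (gE _ dx) (funext (fun k => gE _ (dk k))).
  exact/rcvgD/rcvgMl/rcvg_dotp.
split=> [k|]; first exact: frechet_subdiff_add_j.
exact/vcvgD/vcvgZ.
Qed.

(* v shifts to the limiting subgradient v + x / lam of g, which is global when g is
   convex. *)
Lemma convex_lim_prox_subdiff x v : convex_fun g -> lim_subdiff f x v ->
  prox_subdiff f lam x v.
Proof.
move=> cg hl; have dx : dom f x by case: hl => /fin_num_dom.
have hg := convex_lim_subgrad cg add_j_neq_ninf (lim_subdiff_add_j hl).
apply/prox_subdiffP; split => // y dy.
by have := hg y; rewrite (add_jE dx) (add_jE dy) -EFinD lee_fin.
Qed.

(* Evaluate at x and y the affine minorant of g supported at t x + (1 - t) y. *)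
Lemma prox_subdiff_convex : convex_set (dom f) ->
  (forall x, dom f x -> prox_subdiff f lam x !=set0) -> convex_fun g.
Proof.
move=> cd ha x y t /dom_add_j dx /dom_add_j dy /andP [t0 t1].
set z := t *: x + (1 - t) *: y.
have dz : dom f z by apply: cd => //; rewrite t0 t1.
have [v /prox_subdiffP [_ hv]] := ha z dz.
set w := v + lam^-1 *: z in hv.
have h1 := hv x dx; have h2 := hv y dy.
rewrite (add_jE dx) (add_jE dy) (add_jE dz) -!EFinM -EFinD lee_fin.
have e : t * dotp w (x - z) + (1 - t) * dotp w (y - z) = 0.
  rewrite -!dotpZr -dotpDr.
  have -> : t *: (x - z) + (1 - t) *: (y - z) = 0.
    by rewrite !scalerBr addrACA -opprD -scalerDl (addrC t) subrK scale1r subrr.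
  by rewrite dotp0r.
nra.
Qed.

Lemma sdom_lim_subdiff : (forall x, dom f x -> prox_subdiff f lam x !=set0) ->
  sdom (lim_subdiff f) = dom f.
Proof.
move=> ha; apply/seteqP; split => x; first by move=> [v [/fin_num_dom]].
by move=> /ha [v hv]; exists v; exact: prox_lim_subdiff.
Qed.

Lemma prox_monotone : monotone_op (prox f lam).
Proof.
move=> x y u v /proxP [du hu] /proxP [dv hv].
have := hu v dv; have := hv u du.
have : 0 < lam^-1 by rewrite invr_gt0.
rewrite !dotpBl !dotpBr (dotpC u x) (dotpC v x) (dotpC u y) (dotpC v y); nra.
Qed.

Lemma prox_hull_monotone z y u v m (w : 'I_m -> R) (q : 'I_m -> V) :
  convcomb w q u -> (forall i, prox f lam z (q i)) -> prox f lam y v ->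
  0 <= dotp (u - v) (z - y).
Proof.
move=> hc hq hv.
rewrite dotpBl -(addrC (- dotp v (z - y))) -(convcomb_affine _ _ hc).
apply: sumr_ge0 => i _; rewrite mulr_ge0 ?hc.1 //.
by rewrite addrC -dotpBl; apply: prox_monotone.
Qed.

(* Adding conv P(z) to the graph of P at z keeps it monotone, so maximality forbids
   any growth. *)
Lemma max_monotone_prox_hull : max_monotone (prox f lam) ->
  forall z, prox f lam z = conv_set (prox f lam z).
Proof.
move=> [_ hmax] z.
pose T y := [set u | prox f lam y u \/ (y = z /\ conv_set (prox f lam z) u)].
have mT : monotone_op T.
  move=> x y u v [hu|[-> [m [w [q [hc hq]]]]]] [hv|[-> [m' [w' [q' [hc' hq']]]]]].
  - exact: prox_monotone.
  - have := prox_hull_monotone hc' hq' hu.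
    by rewrite -opprB dotpNl -(opprB x) dotpNr opprK.
  - exact: prox_hull_monotone hc hq hv.
  - by rewrite subrr dotp0r.
have eT := hmax T mT (fun x u hu => or_introl hu).
apply/seteqP; split => u hu; last by rewrite -eT; right.
by exists 1%N, (fun=> 1), (fun=> u); split => //; exact: convcomb1.
Qed.

End ProximalSubgradients.

Section BelowThreshold.
Variables (R : realType) (n : nat) (f : 'rV[R]_n -> \bar R) (lam : R).
Local Notation V := 'rV[R]_n.
Local Notation g := (add_j f lam).
Hypothesis fproper : proper_fun f.
Hypothesis lam_gt0 : 0 < lam.
Hypothesis lam_lt_threshold : (lam%:E < prox_threshold f)%E.

Lemma moreau_lb : exists2 mu, lam < mu &
  exists x0 (beta : R), forall y, (beta%:E <= f y + (pen mu x0 y)%:E)%E.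
Proof.
have [_ [mu [mu0 [x0 hm]]] <-] := ereal_sup_gt lam_lt_threshold.
rewrite lte_fin => lmu; exists mu => //; exists x0.
have lb y : (moreau f mu x0 <= f y + (pen mu x0 y)%:E)%E.
  by apply: ereal_inf_lbound; exists y.
move: hm lb; case: (moreau f mu x0) => [r| |] // _ lb; first by exists r.
by exists 0 => y; have := lb y; rewrite leye_eq => /eqP ->; rewrite leey.
Qed.

(* With mu > lam from prox-boundedness, the quadratic lam^-1 j beats the -mu^-1 j
   hidden in the lower bound of f; Young's inequality absorbs the linear terms. *)
Lemma coercive_tilt (a : V) :
  coercive (fun y => f y + (lam^-1 * jfun y - dotp a y)%:E)%E.
Proof.
have [mu lmu [x0 [beta hb]]] := moreau_lb.
have mu0 : 0 < mu by exact: lt_trans lam_gt0 lmu.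
have li : mu^-1 < lam^-1 by rewrite ltf_pV2 ?posrE.
set c := (lam^-1 - mu^-1) / 4.
have c0 : 0 < c by rewrite divr_gt0 // subr_gt0.
set b := mu^-1 *: x0 - a.
exists c => //; exists (- beta + mu^-1 * sqn x0 / 2 + sqn b / (4 * c)) => y.
have [dy|ndy] := pselect (dom f y); last by rewrite (notdom_fE fproper ndy) leey.
have := hb y; rewrite (dom_fE fproper dy) -!EFinD !lee_fin => h.
have := dotp_young y b c0.
have -> : fine (f y) + (lam^-1 * jfun y - dotp a y) =
  (fine (f y) + pen mu x0 y - beta) + (beta - mu^-1 * sqn x0 / 2) + 2 * c * sqn y + dotp y b.
  rewrite /pen /jfun /b /c dotpBr dotpZr sqnB (dotpC y a) (dotpC y x0).
  by field; rewrite !gt_eqF.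
lra.
Qed.

Lemma conv_add_j_neq_ninf y : conv_fun g y != -oo%E.
Proof.
have [c c0 [C hC]] := coercive_tilt 0.
suff : ((- C + dotp 0 y)%:E <= conv_fun g y)%E by case: (conv_fun g y).
apply: conv_fun_ge_affine => [p|p /(dom_add_j lam fproper) dp]; first exact: add_j_neq_ninf.
rewrite (add_jE lam fproper dp) /= dotp0l addr0.
have := hC p; rewrite (dom_fE fproper dp) dotp0l subr0 -EFinD lee_fin /gfin.
by have := sqn_ge0 p; nra.
Qed.

Hypothesis dom_convex : convex_set (dom f).

Lemma sdom_lim_conv_add_j_sub : sdom (lim_subdiff (conv_fun g)) `<=` dom f.
Proof.
move=> x [v [xfin _]].
have [m [w [p [hc [hd _]]]]] := @conv_fun_lt _ _ g (add_j_neq_ninf lam fproper) x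
  (fine (conv_fun g x) + 1) (ltac:(by rewrite EFinD fineK // lteDl // lte_fin)).
have [x1 hx1] := fproper.2.
pose p' i := if w i == 0 then x1 else p i.
apply: (@convex_set_convcomb _ _ _ _ w p') => // [|i].
  split; [exact: hc.1|split; [exact: hc.2.1|]].
  by rewrite hc.2.2; apply: eq_bigr => i _; rewrite /p'; case: eqP => // ->; rewrite !scale0r.
by rewrite /p'; case: eqP => // /eqP /hd /(dom_add_j lam fproper).
Qed.

Hypothesis prox_subdiff_nonempty : forall x, dom f x -> prox_subdiff f lam x !=set0.

(* A point y of conv P(z) has a supporting affine minorant of g; averaging the
   optimality of the P(z)-points against it shows that y is optimal too. *)
Lemma prox_convex_valued z : prox f lam z = conv_set (prox f lam z).
Proof.
apply/seteqP; split => [y hy|y [m [w [p [hc hp]]]]].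
  by exists 1%N, (fun=> 1), (fun=> y); split => //; exact: convcomb1.
have dp i : dom f (p i) by case: ((proxP fproper lam_gt0 z (p i)).1 (hp i)).
have dy : dom f y by apply: (convex_set_convcomb dom_convex hc).
have [v /(prox_subdiffP fproper lam_gt0) [_ hv]] := prox_subdiff_nonempty dy.
set wv := v + lam^-1 *: y in hv.
apply/proxP => //; split => // y' dy'.
set c := gfin f lam y - dotp y wv; set a := wv - lam^-1 *: z.
have -> : gfin f lam y - lam^-1 * dotp z y = c + dotp y a.
  by rewrite /c /a dotpBr dotpZr (dotpC z y); ring.
rewrite -(convcomb_affine c a hc).
rewrite -(convcomb_sum_const (gfin f lam y' - lam^-1 * dotp z y') hc).
apply: ler_convcomb hc _ => i.
have [_ hpi] := (proxP fproper lam_gt0 z (p i)).1 (hp i).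
apply: le_trans (hpi y' dy').
have := hv (p i) (dp i).
by rewrite /c /a !dotpBr dotpZr (dotpC z (p i)) (dotpC wv (p i)) (dotpC wv y); lra.
Qed.

(* At x in dom f the affine minorant of g given by a proximal subgradient is exact,
   so conv g = g at x and the slope is a subgradient of conv g. *)
Lemma sdom_lim_conv_add_j : sdom (lim_subdiff (conv_fun g)) = dom f.
Proof.
apply/seteqP; split=> [|x dx]; first exact: sdom_lim_conv_add_j_sub.
have [v /(prox_subdiffP fproper lam_gt0) [_ hv]] := prox_subdiff_nonempty dx.
set w := v + lam^-1 *: x in hv; exists w.
have low := @conv_fun_ge_affine _ _ g (add_j_neq_ninf lam fproper)
  (gfin f lam x - dotp w x) w.
have {}low y : ((gfin f lam x - dotp w x + dotp w y)%:E <= conv_fun g y)%E.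
  apply: low => p /(dom_add_j lam fproper) dp; rewrite (add_jE lam fproper dp) /=.
  by have := hv p dp; rewrite dotpBr; lra.
have eC : conv_fun g x = (gfin f lam x)%:E.
  apply/eqP; rewrite eq_le; have := conv_fun_le g x; rewrite (add_jE lam fproper dx) => ->.
  by have := low x; rewrite subrK.
apply/frechet_lim_subdiff/subgrad_frechet; first by rewrite eC.
move=> y; rewrite eC -EFinD; apply: le_trans _ (low y).
by rewrite lee_fin dotpBr; lra.
Qed.

End BelowThreshold.

Section Resolvent.
Variables (R : realType) (n : nat) (f : 'rV[R]_n -> \bar R) (lam : R).
Local Notation V := 'rV[R]_n.
Local Notation g := (add_j f lam).
Hypothesis fproper : proper_fun f.
Hypothesis flsc : lsc f.
Hypothesis lam_gt0 : 0 < lam.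
Hypothesis lam_lt_threshold : (lam%:E < prox_threshold f)%E.
Hypothesis dom_convex : convex_set (dom f).

Lemma exists_argmin_add_j_pen (a : V) : exists2 q, dom f q &
  forall y, dom f y -> gfin f lam q + pen lam a q <= gfin f lam y + pen lam a y.
Proof.
pose k y := (f y + (lam^-1 * jfun y + pen lam a y)%:E)%E.
have kE y : dom f y -> k y = (gfin f lam y + pen lam a y)%:E.
  by move=> dy; rewrite /k (dom_fE fproper dy) -EFinD /gfin addrA.
have [|||q hq] := @lsc_coercive_min _ _ k.
- apply: lscD_econtinuous => //.
  have -> : (fun y => lam^-1 * jfun y + pen lam a y) =
      (fun y => lam^-1 * sqn y + dotp (- lam^-1 *: a) y + lam^-1 * jfun a).
    by apply: funext => y /=; rewrite penE // dotpZl (dotpC a y) /jfun; field; rewrite gt_eqF.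
  exact: econtinuous_quadratic.
- have [c c0 [C hC]] := coercive_tilt fproper lam_gt0 lam_lt_threshold 0.
  exists c => //; exists C => y; apply: le_trans (hC y) _.
  by rewrite leeD2l // lee_fin dotp0l subr0 lerDl pen_ge0.
- by have [x1 hx1] := fproper.2; exists x1; rewrite kE // ltry.
have [x1 hx1] := fproper.2.
have dq : dom f q.
  have := hq x1; rewrite (kE _ hx1) /k /dom /=.
  by have := f_neq_ninf fproper q; case: (f q) => //= r _ _; exact: ltry.
by exists q => // y dy; have := hq y; rewrite !kE.
Qed.

Hypothesis g_convex : convex_fun g.

Lemma add_j_fin_convex (x y : V) (t : R) : dom f x -> dom f y -> 0 <= t <= 1 ->
  gfin f lam (t *: x + (1 - t) *: y) <= t * gfin f lam x + (1 - t) * gfin f lam y.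
Proof.
move=> dx dy ht; have dz : dom f (t *: x + (1 - t) *: y) by apply: dom_convex.
have := g_convex ((dom_add_j lam fproper x).2 dx) ((dom_add_j lam fproper y).2 dy) ht.
by rewrite !(add_jE lam fproper) // -!EFinM -EFinD lee_fin.
Qed.

(* First-order optimality of q for the strongly convex g + pen a, tested along the
   segments [q, q']. *)
Lemma argmin_add_j_pen_prox (a q : V) : dom f q ->
  (forall y, dom f y -> gfin f lam q + pen lam a q <= gfin f lam y + pen lam a y) ->
  prox f lam (a - q) q.
Proof.
move=> dq hq; apply/proxP => //; split => // q' dq'.
rewrite -subr_le0; apply: (@le0_of_le_scale _ _ (lam^-1 * sqn (q' - q) / 2)) => t t0 t1.
have ht : 0 <= t <= 1 by rewrite t1 ltW.
set zt := t *: q' + (1 - t) *: q.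
have h1 := hq zt (dom_convex dq' dq ht).
have h2 := add_j_fin_convex dq' dq ht.
have : pen lam a zt = pen lam a q + t * (lam^-1 * dotp (q - a) (q' - q)) +
                       t ^+ 2 * (lam^-1 * sqn (q' - q) / 2).
  rewrite /pen; have -> : zt - a = (q - a) + t *: (q' - q).
    by apply/rowP => i; rewrite !mxE; ring.
  by rewrite sqnD sqnZ dotpZr; field; rewrite gt_eqF.
set D := lam^-1 * dotp (q - a) (q' - q); set b := lam^-1 * sqn (q' - q) / 2 => h3.
have e4 : lam^-1 * dotp (a - q) q' - lam^-1 * dotp (a - q) q = - D.
  by rewrite -mulrBr -dotpBr -mulrN -dotpNl opprB.
have : 0 <= t * (gfin f lam q' - gfin f lam q + D + t * b) by nra.
by rewrite pmulr_rge0 //; lra.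
Qed.

End Resolvent.

(* For (x, u) in a monotone extension, the minimizer q of g + pen (x + u) lies in
   P(x + u - q); monotonicity against this pair gives -|u - q|^2 >= 0. *)
Lemma prox_max_monotone (R : realType) (n : nat) (f : 'rV[R]_n -> \bar R) (lam : R) :
  proper_fun f -> lsc f -> 0 < lam -> (lam%:E < prox_threshold f)%E ->
  convex_set (dom f) -> (forall x, dom f x -> prox_subdiff f lam x !=set0) ->
  max_monotone (prox f lam).
Proof.
move=> fproper flsc lam0 hth cd ha; split=> [|T mT hsub]; first exact: prox_monotone.
have cg := prox_subdiff_convex fproper lam0 cd ha.
apply: funext => x; apply/seteqP; split => u; last exact: hsub x u.
move=> hu; have [q dq hq] := exists_argmin_add_j_pen fproper flsc lam0 hth (x + u).
have hp := argmin_add_j_pen_prox fproper lam0 cd cg dq hq.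
have := mT x (x + u - q) u q hu (hsub _ _ hp).
have -> : x - (x + u - q) = - (u - q) by apply/rowP => i; rewrite !mxE; ring.
rewrite dotpNr oppr_ge0 => h.
have uq : u = q by apply/eqP; rewrite -subr_eq0; apply/eqP/sqn_eq0/le_anti; rewrite h sqn_ge0.
by move: hp; rewrite uq addrK.
Qed.

Lemma halfspace_gap_bound (R : realType) (n : nat) (D : set 'rV[R]_n)
    (h : 'rV[R]_n -> R) (u : 'rV[R]_n) (m0 gam eta C1 : R) :
  0 < eta -> (forall y, D y -> m0 <= h y) ->
  (forall y, D y -> gam <= dotp u y -> m0 + eta <= h y) ->
  (forall y, D y -> dotp u y <= h y + C1) ->
  exists2 K, 0 < K & forall y, D y -> dotp u y <= gam + K * (h y - m0).
Proof.
move=> eta0 hm0 heta hub.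
set L := `|gam| + `|C1 + m0|; set K := L / eta + 1.
have Le : 0 <= L / eta by rewrite divr_ge0 ?addr_ge0 // ltW.
have K1 : (K - 1) * eta = L by rewrite /K addrK mulfVK // gt_eqF.
have hL : m0 + C1 - gam <= L.
  by have := ler_norm (- gam); have := ler_norm (C1 + m0); rewrite normrN /L; lra.
exists K => [|y Dy]; first by rewrite /K; lra.
have := hm0 y Dy; case: (lerP gam (dotp u y)) => hg hmy; last first.
  have : 0 <= K * (h y - m0) by apply: mulr_ge0; rewrite /K; lra.
  lra.
have := heta y Dy hg; have := hub y Dy => hb he.
have : (K - 1) * eta <= (K - 1) * (h y - m0) by rewrite ler_wpM2l // /K; lra.
have -> : K * (h y - m0) = (K - 1) * (h y - m0) + (h y - m0) by ring.
lra.
Qed.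

Section ConvexValuedProx.
Variables (R : realType) (n : nat) (f : 'rV[R]_n -> \bar R) (lam : R).
Local Notation V := 'rV[R]_n.
Local Notation g := (add_j f lam).
Hypothesis fproper : proper_fun f.
Hypothesis flsc : lsc f.
Hypothesis lam_gt0 : 0 < lam.
Hypothesis lam_lt_threshold : (lam%:E < prox_threshold f)%E.

Lemma lsc_tilt (a : V) : lsc (fun y => f y + (lam^-1 * jfun y - dotp a y)%:E)%E.
Proof.
apply: lscD_econtinuous => //.
have -> : (fun y => lam^-1 * jfun y - dotp a y) =
    (fun y => (lam^-1 / 2) * sqn y + dotp (- a) y + 0).
  by apply: funext => y /=; rewrite dotpNl /jfun addr0 mulrA mulrAC.
exact: econtinuous_quadratic.
Qed.

Hypothesis prox_eq_hull : forall z, prox f lam z = conv_set (prox f lam z).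
Variables (x w : V).
Hypothesis dx : dom f x.
Hypothesis w_subdiff : lim_subdiff (conv_fun g) x w.

Let htilt y := gfin f lam y - dotp w y.
Let m0 := fine (conv_fun g x) - dotp w x.
Let ftilt y := (f y + (lam^-1 * jfun y - dotp w y)%:E)%E.

Lemma conv_add_jE : conv_fun g x = (m0 + dotp w x)%:E.
Proof. by rewrite /m0 subrK fineK //; case: w_subdiff. Qed.

Lemma ftiltE y : dom f y -> ftilt y = (htilt y)%:E.
Proof. by move=> dy; rewrite /ftilt (dom_fE fproper dy) -EFinD /htilt /gfin addrA. Qed.

Lemma dom_ftilt y : (ftilt y < +oo)%E -> dom f y.
Proof. by have [//|/(notdom_fE fproper) ndy] := pselect (dom f y); rewrite /ftilt ndy. Qed.

Lemma htilt_ge y : dom f y -> m0 <= htilt y.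
Proof.
move=> dy; have Cninf := conv_add_j_neq_ninf fproper lam_gt0 lam_lt_threshold.
have Ccvx := conv_fun_convex (add_j_neq_ninf lam fproper) Cninf.
have hC := convex_lim_subgrad Ccvx Cninf w_subdiff.
have := le_trans (hC y) (conv_fun_le g y).
by rewrite conv_add_jE (add_jE lam fproper dy) -EFinD lee_fin dotpBr /htilt; lra.
Qed.

(* A constant below htilt on dom f gives an affine minorant of g, hence of conv g. *)
Lemma htilt_le_of_lb (c : R) (a : V) :
  (forall y, dom f y -> c + dotp a y <= htilt y) -> c + dotp (w + a) x <= m0 + dotp w x.
Proof.
move=> hc; rewrite -lee_fin -conv_add_jE.
apply: conv_fun_ge_affine => [y|y /(dom_add_j lam fproper) dy]; first exact: add_j_neq_ninf.
by rewrite (add_jE lam fproper dy) /= dotpDl; have := hc y dy; rewrite /htilt; lra.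
Qed.

Lemma exists_htilt_argmin : exists2 q0, dom f q0 & htilt q0 <= m0.
Proof.
have [|||q0 hq0] := @lsc_coercive_min _ _ ftilt; first exact: lsc_tilt.
- exact: coercive_tilt.
- by exists x; rewrite ftiltE // ltry.
have dq0 : dom f q0 by apply: dom_ftilt; apply: le_lt_trans (hq0 x) _; rewrite ftiltE // ltry.
exists q0 => //; suff : htilt q0 + dotp (w + 0) x <= m0 + dotp w x by rewrite addr0; lra.
apply: htilt_le_of_lb => y dy; rewrite dotp0l addr0.
by have := hq0 y; rewrite !ftiltE // lee_fin.
Qed.

Lemma prox_tiltE y : prox f lam (lam *: w) y <-> (ftilt y <= m0%:E)%E.
Proof.
have e y' : gfin f lam y' - lam^-1 * dotp (lam *: w) y' = htilt y'.
  by rewrite dotpZl mulrA mulVf ?gt_eqF // mul1r.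
rewrite proxP //; split => [[dy hy]|hy].
  have [q0 dq0 hq0] := exists_htilt_argmin.
  by rewrite ftiltE // lee_fin; have := hy q0 dq0; rewrite !e; lra.
have dy : dom f y by apply: dom_ftilt; apply: le_lt_trans hy (ltry _).
split => // y' dy'; rewrite !e; move: hy; rewrite ftiltE // lee_fin => hy.
exact: le_trans hy (htilt_ge dy').
Qed.

Lemma tilt_projection : exists2 p, (ftilt p <= m0%:E)%E &
  forall q, (ftilt q <= m0%:E)%E -> dotp (x - p) (q - p) <= 0.
Proof.
pose P := [set y | (ftilt y <= m0%:E)%E].
have Pcvx : convex_set P.
  apply: convex_set_of_hull => y; rewrite (_ : P = prox f lam (lam *: w)).
    by rewrite -prox_eq_hull.
  by apply/seteqP; split => z /prox_tiltE.
have [q0 dq0 hq0] := exists_htilt_argmin.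
apply: (@eclosed_convex_projection _ _ P x (eclosed_sublevel (c := m0) (@lsc_tilt w)) Pcvx).
by exists q0; rewrite /P /= ftiltE // lee_fin.
Qed.

(* With p the projection of x onto argmin htilt = P_lam f (lam w), the half-space
   beyond the midpoint of [p, x] keeps htilt above its minimum by some eta > 0;
   tilting the affine minorant of conv g by (x - p) / K then overshoots conv g at x. *)
Lemma htilt_le_at : htilt x <= m0.
Proof.
rewrite leNgt; apply/negP => hlt.
have [p Pp hp] := tilt_projection.
set u := x - p.
have u0 : 0 < sqn u.
  rewrite lt0r sqn_ge0 andbT; apply/eqP => /sqn_eq0 /eqP.
  by rewrite subr_eq0 => /eqP xp; move: Pp; rewrite -xp ftiltE // lee_fin; lra.
have hPu q : (ftilt q <= m0%:E)%E -> dotp u q <= dotp u x - sqn u.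
  by move=> /hp; rewrite -/u dotpBr /sqn {2}/u dotpBr; lra.
set gam := dotp u x - sqn u / 2.
have [||||y2 hy2 min2] := @lsc_coercive_min_on _ _ ftilt (fun y => gam <= dotp u y).
- exact: lsc_tilt.
- exact: coercive_tilt.
- exact: eclosed_halfspace.
- by exists x; rewrite ?ftiltE ?ltry // /gam; lra.
have dy2 : dom f y2.
  by apply: dom_ftilt; apply: le_lt_trans (min2 x _) _; rewrite ?ftiltE ?ltry // /gam; lra.
have eta0 : 0 < htilt y2 - m0.
  rewrite subr_gt0 ltNge; apply/negP => hle.
  by have := hPu y2 (ltac:(by rewrite ftiltE // lee_fin)); rewrite /= /gam in hy2; lra.
have heta y : dom f y -> gam <= dotp u y -> m0 + (htilt y2 - m0) <= htilt y.
  by move=> dy hg; have := min2 y hg; rewrite !ftiltE // lee_fin; lra.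
have [c1 c10 [C1 hC1]] := coercive_tilt fproper lam_gt0 lam_lt_threshold (w + u).
have hub y : dom f y -> dotp u y <= htilt y + C1.
  move=> dy; have := hC1 y; rewrite (dom_fE fproper dy) -EFinD lee_fin dotpDl /htilt /gfin.
  by have := sqn_ge0 y; nra.
have [K K0 key] := halfspace_gap_bound eta0 htilt_ge heta hub.
have Ki : 0 < K^-1 by rewrite invr_gt0.
have hlb y : dom f y -> m0 - K^-1 * gam + dotp (K^-1 *: u) y <= htilt y.
  move=> dy; have := key y dy; rewrite dotpZl -(ler_pM2l Ki).
  by rewrite mulrDr mulrA mulVf ?gt_eqF // mul1r; lra.
have := htilt_le_of_lb hlb; rewrite dotpDl dotpZl /gam.
have : 0 < K^-1 * (sqn u / 2) by rewrite mulr_gt0 ?divr_gt0.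
lra.
Qed.

Lemma prox_subdiff_of_conv_subdiff : prox_subdiff f lam x (w - lam^-1 *: x).
Proof.
apply/prox_subdiffP => //; rewrite subrK; split => // y dy.
have := htilt_ge dy; have := htilt_le_at; rewrite /htilt dotpBr; lra.
Qed.

End ConvexValuedProx.

Theorem mainTheorem6 (R : realType) (n : nat) (f : 'rV[R]_n -> \bar R) (lam : R) :
  proper_fun f -> lsc f -> prox_bounded f ->
  (0%:E < prox_threshold f)%E ->
  0 < lam -> (lam%:E < prox_threshold f)%E ->
  convex_set (dom f) ->
  let a := forall x, dom f x -> prox_subdiff f lam x !=set0 in
  let b := (forall x, prox f lam x = conv_set (prox f lam x)) /\
           sdom (lim_subdiff (conv_fun (add_j f lam))) = dom f in
  let c := max_monotone (prox f lam) /\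
           sdom (lim_subdiff (conv_fun (add_j f lam))) = dom f in
  let d := convex_fun (add_j f lam) /\ sdom (lim_subdiff f) = dom f in
  let e := (prox_subdiff f lam = lim_subdiff f) /\ sdom (lim_subdiff f) = dom f in
  (a <-> b) /\ (a <-> c) /\ (a <-> d) /\ (a <-> e).
Proof.
move=> fproper flsc _ _ lam0 hth cd a b c d e.
have ab : a -> b := fun ha => conj (prox_convex_valued fproper lam0 cd ha)
  (sdom_lim_conv_add_j fproper lam0 cd ha).
have ba : b -> a.
  move=> [hprox hsd] x dx; have [w hw] : sdom (lim_subdiff (conv_fun (add_j f lam))) x.
    by rewrite hsd.
  by exists (w - lam^-1 *: x); exact: prox_subdiff_of_conv_subdiff hw.
have ad : a -> d := fun ha => conj (prox_subdiff_convex fproper lam0 cd ha)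
  (sdom_lim_subdiff fproper lam0 ha).
have da : d -> a.
  move=> [cg hs] x dx; have [v hv] : sdom (lim_subdiff f) x by rewrite hs.
  by exists v; exact: convex_lim_prox_subdiff hv.
split; first by split.
split; first split.
- by move=> ha; split; [exact: prox_max_monotone|exact: (ab ha).2].
- by move=> [hm hs]; apply: ba; split => //; exact: max_monotone_prox_hull.
split; first by split.
split.
- move=> ha; split; last exact: (ad ha).2.
  apply: funext => x; apply/seteqP; split => v; first exact: prox_lim_subdiff.
  exact: convex_lim_prox_subdiff (ad ha).1.
- move=> [he hs] x dx; have [v hv] : sdom (lim_subdiff f) x by rewrite hs.
  by exists v; rewrite he.
Qed.
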